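(* Let $G$ be an unweighted digraph without loops and $M(t)$ its directed deformed graph Laplacian. Then $1$ is always an eigenvalue of $M(t)$, and its geometric multiplicity equals the number of connected components of the undirected part $G_U$ of $G$. Moreover, $-1$ is an eigenvalue of $M(t)$ if and only if $G_U$ has at least one bipartite connected component, and in that case its geometric multiplicity equals the number of bipartite connected components of $G_U$.
   Context: A digraph $G=(V,E)$, no loops or multiple edges, adjacency matrix $A$; $S=A\circ A^T$, $D=\mathrm{diag}(\mathrm{diag}(A^2))$; $M(t)=I-At+(D-I)t^2+(A-S)t^3$. The undirected part $G_U$ of $G$ is the undirected graph on $V$ whose edges are the pairs $\{i,j\}$ with both $(i,j),(j,i)\in E$ (adjacency matrix $S$); an isolated vertex of $G_U$ counts as a (bipartite) connected component. The geometric multiplicity of an eigenvalue $\lambda$ of $M(t)$ is $\dim\ker M(\lambda)$. *)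

From HB Require Import structures.
From mathcomp Require Import all_boot all_order all_algebra.
Set Implicit Arguments. Unset Strict Implicit. Unset Printing Implicit Defensive.
Import Order.TTheory GRing.Theory Num.Theory.
Local Open Scope ring_scope.

(* A digraph on vertex set 'I_n is given by its edge relation E : rel 'I_n
   ((i,j) is an edge iff E i j); no multiple edges by construction,
   no loops is a hypothesis of the theorem. *)

Section Defs.
Variables (R : numFieldType) (n : nat).

Definition adjmx (E : rel 'I_n) : 'M[R]_n := \matrix_(i, j) (E i j)%:R.

Definition Smx (A : 'M[R]_n) : 'M[R]_n := \matrix_(i, j) (A i j * A^T i j).

Definition Dmx (A : 'M[R]_n) : 'M[R]_n := diag_mx (\row_i ((A *m A) i i)).

Definition deformed_lap (A : 'M[R]_n) (t : R) : 'M[R]_n :=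
  1%:M - t *: A + t ^+ 2 *: (Dmx A - 1%:M) + t ^+ 3 *: (A - Smx A).

Definition mxpoly_eigenvalue (M : R -> 'M[R]_n) (l : R) : Prop :=
  \det (M l) = 0.

(* geometric multiplicity: dim ker M(lambda), the kernel being
   {v | M(lambda) v = 0} = {v^T | v^T M(lambda)^T = 0} (kermx is the row kernel) *)
Definition geom_mult (M : R -> 'M[R]_n) (l : R) : nat :=
  \rank (kermx (M l)^T).
End Defs.

Definition undir_part n (E : rel 'I_n) : rel 'I_n := fun i j => E i j && E j i.

Definition num_components n (U : rel 'I_n) : nat := n_comp U predT.

Definition bipartite_component n (U : rel 'I_n) (r : 'I_n) : bool :=
  [exists c : {ffun 'I_n -> bool},
     [forall x, forall y, (connect U r x && U x y) ==> (c x != c y)]].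

Definition num_bipartite_components n (U : rel 'I_n) : nat :=
  #|[set r | (r \in roots U) && bipartite_component U r]|.

From HB Require Import structures.
From mathcomp Require Import all_boot all_order all_algebra.
From mathcomp Require Import ring.
Import GRing.Theory Num.Theory.
Set Implicit Arguments. Unset Strict Implicit.
Local Open Scope ring_scope.

(* At t = 1 and t = -1 the deformed Laplacian collapses onto a Laplacian of
   the undirected part U = G_U: with t^2 = 1 one has M(t) = Deg + (-t) * Adj(U),
   where Deg is the diagonal matrix of U-degrees.  So M(1) is the Laplacian
   Deg - Adj(U) and M(-1) the signless Laplacian Deg + Adj(U).
   For s = -1 or 1, the quadratic form of Deg + s * Adj(U) is
   1/2 * sum over edges {i,j} of (v_i + s v_j)^2, so over an ordered field its
   kernel consists of the vectors with v_i = -s v_j along every edge: the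
   vectors constant on each component (s = -1), resp. alternating in sign
   along the edges of each bipartite component and vanishing elsewhere
   (s = 1).  A kernel of this shape has one free coordinate per (bipartite)
   component, which a general selection lemma turns into a rank count.
   The matrices have rational entries, so the ranks are computed over rat and
   transported to the arbitrary numFieldType R of the theorem; eigenvalues
   and geometric multiplicities then follow from det M = 0 <-> ker M <> 0. *)

Lemma rank_kermx_selection (F : fieldType) (n : nat) (L : 'M[F]_n)
    (S : {set 'I_n}) (B : 'M[F]_(#|S|, n)) :
  B *m L = 0 ->
  (forall k k' : 'I_#|S|, B k (enum_val k') = (k == k')%:R) ->
  (forall v : 'rV[F]_n, v *m L = 0 -> {in S, forall r, v 0 r = 0} -> v = 0) ->
  \rank (kermx L) = #|S|.
Proof.
move=> BL Bsel ker_inj.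
pose P : 'M[F]_(n, #|S|) := colsub enum_val 1%:M.
have mulP m (v : 'M[F]_(m, n)) i k : (v *m P) i k = v i (enum_val k).
  by rewrite mulmx_colsub mulmx1 mxE.
apply/eqP; rewrite eqn_leq; apply/andP; split.
  have kerLP0 : \rank (kermx L :&: kermx P)%MS = 0%N.
    apply/eqP; rewrite mxrank_eq0; apply/rowV0P => v.
    rewrite sub_capmx !sub_kermx => /andP[/eqP vL /eqP vP].
    apply: ker_inj => // r rS.
    by have := mulP _ v 0 (enum_rank_in rS r); rewrite vP enum_rankK_in // mxE.
  by rewrite -(mxrank_mul_ker (kermx L) P) kerLP0 addn0 rank_leq_col.
have BP1 : B *m P = 1%:M by apply/matrixP => k k'; rewrite mulP Bsel mxE.
have BK : (B <= kermx L)%MS by rewrite sub_kermx BL.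
by rewrite -{1}(mxrank1 F #|S|) -BP1 (leq_trans (mxrankM_maxl _ _) (mxrankS BK)).
Qed.

Section SignedLaplacian.
Variables (F : nzRingType) (n : nat) (U : rel 'I_n).

Definition degree (i : 'I_n) : F := \sum_k (U i k)%:R.

Definition signed_lap (s : F) : 'M[F]_n :=
  \matrix_(i, j) ((i == j)%:R * degree i + s * (U i j)%:R).

End SignedLaplacian.

Section LaplacianKernel.
Variables (F : comNzRingType) (n : nat) (U : rel 'I_n).
Hypothesis Usym : symmetric U.
Local Notation u i j := ((U i j)%:R : F).

Lemma signed_lap_col (s : F) (v : 'rV[F]_n) (j : 'I_n) :
  (v *m signed_lap U s) 0 j = \sum_i u i j * (v 0 j + s * v 0 i).
Proof.
rewrite mxE; under eq_bigr do rewrite mxE mulrDr.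
rewrite big_split /= (bigD1 j) //= eqxx mul1r big1 ?addr0; last first.
  by move=> i /negPf->; rewrite mul0r mulr0.
rewrite /degree mulr_sumr -big_split /=; apply: eq_bigr => i _.
by rewrite Usym; ring.
Qed.

Lemma signed_lap_quadratic (s : F) (v : 'rV[F]_n) : s ^+ 2 = 1 ->
  (\sum_j v 0 j * (v *m signed_lap U s) 0 j) *+ 2 =
  \sum_i \sum_j u i j * (v 0 i + s * v 0 j) ^+ 2.
Proof.
move=> s2.
pose Q i j := u i j * (v 0 i ^+ 2 + s * v 0 i * v 0 j).
have QE : \sum_j v 0 j * (v *m signed_lap U s) 0 j = \sum_i \sum_j Q i j.
  apply: eq_bigr => j _; rewrite signed_lap_col mulr_sumr.
  by apply: eq_bigr => i _; rewrite /Q [U j i]Usym; ring.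
have Qswap : \sum_i \sum_j Q i j = \sum_i \sum_j Q j i by rewrite exchange_big.
rewrite mulr2n {1}QE Qswap QE -big_split; apply: eq_bigr => i _.
rewrite -big_split; apply: eq_bigr => j _; rewrite /Q Usym.
have -> : v 0 j ^+ 2 = s ^+ 2 * v 0 j ^+ 2 by rewrite s2 mul1r.
by rewrite /=; ring.
Qed.

End LaplacianKernel.

Section LaplacianKernelReal.
Variables (F : realDomainType) (n : nat) (U : rel 'I_n).
Hypothesis Usym : symmetric U.

(* Over an ordered domain, v is in the kernel iff v_i + s v_j = 0 along
   every edge: the quadratic form is a sum of nonnegative terms. *)
Lemma signed_lap_kerP (s : F) (v : 'rV[F]_n) : s ^+ 2 = 1 ->
  v *m signed_lap U s = 0 <-> (forall i j, U i j -> v 0 i + s * v 0 j = 0).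
Proof.
move=> s2; split=> [vL i j Uij | edge].
  have term_ge0 i' j' : 0 <= (U i' j')%:R * (v 0 i' + s * v 0 j') ^+ 2.
    by rewrite mulr_ge0 ?ler0n ?sqr_ge0.
  have sum0 : \sum_i \sum_j (U i j)%:R * (v 0 i + s * v 0 j) ^+ 2 = 0 :> F.
    by rewrite -signed_lap_quadratic // vL big1 ?mul0rn // => j' _; rewrite mxE mulr0.
  have row_ge0 i' : 0 <= \sum_j' (U i' j')%:R * (v 0 i' + s * v 0 j') ^+ 2.
    by apply: sumr_ge0 => j' _; apply: term_ge0.
  have row0 := psumr_eq0P (fun i' _ => row_ge0 i') sum0 (i := i) isT.
  have := psumr_eq0P (fun j' _ => term_ge0 i j') row0 (i := j) isT.
  by rewrite Uij mul1r => /eqP; rewrite sqrf_eq0 => /eqP.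
apply/rowP => j; rewrite signed_lap_col // mxE big1 // => i _.
case Uij: (U i j); last by rewrite mul0r.
by rewrite Usym in Uij; rewrite edge ?mulr0.
Qed.

End LaplacianKernelReal.

Section Components.
Variables (n : nat) (U : rel 'I_n).
Hypothesis Usym : symmetric U.
Let connect_sym := sym_connect_sym Usym.
Local Notation root := (fingraph.root U).

Lemma edge_root i j : U i j -> root i = root j.
Proof. by move=> Uij; apply/(fingraph.rootP connect_sym)/connect1. Qed.

Lemma connect_from_root x : connect U (root x) x.
Proof. by rewrite connect_sym connect_root. Qed.

Lemma connect_edge_inv (T : Type) (f : 'I_n -> T) :
  (forall i j, U i j -> f i = f j) -> forall x y, connect U x y -> f x = f y.
Proof.
move=> Hf x y /connectP[p pth ->]; elim: p x pth => //= z p IH x /andP[Uxz pth].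
by rewrite (Hf _ _ Uxz) IH.
Qed.

Lemma connect_edge_antisym (G : zmodType) (f : 'I_n -> G) :
  (forall i j, U i j -> f j = - f i) ->
  forall x y, connect U x y -> f y = f x \/ f y = - f x.
Proof.
move=> Hf x y /connectP[p pth ->]; elim: p x pth => /= [|z p IH] x; first by left.
by case/andP=> Uxz /IH; rewrite (Hf _ _ Uxz) opprK; case; [right | left].
Qed.

Definition bipartition (r : 'I_n) : {ffun 'I_n -> bool} :=
  odflt [ffun => false]
    [pick c : {ffun 'I_n -> bool} |
       [forall x, forall y, (connect U r x && U x y) ==> (c x != c y)]].

Lemma bipartitionP r : bipartite_component U r ->
  forall x y, connect U r x -> U x y -> bipartition r x != bipartition r y.
Proof.
rewrite /bipartite_component /bipartition; case: pickP => [c /forallP Hc | no_c] /=.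
  move=> _ x y rx Uxy; have /forallP/(_ y)/implyP := Hc x; apply; by rewrite rx Uxy.
by case/existsP => c Hc; rewrite no_c in Hc.
Qed.

Section ComponentKernels.
Variable F : realFieldType.

Lemma rank_kermx_lap :
  \rank (kermx (signed_lap U (-1 : F))) = #|[set r | r \in roots U]|.
Proof.
set S := [set r | _].
pose B : 'M[F]_(#|S|, n) := \matrix_(k, i) (root i == enum_val k)%:R.
have s2 : (-1 : F) ^+ 2 = 1 by rewrite sqrrN expr1n.
apply: (rank_kermx_selection (B := B)).
- apply/row_matrixP => k; rewrite row_mul row0; apply/signed_lap_kerP => // i j Uij.
  by rewrite !mxE (edge_root Uij) mulN1r subrr.
- move=> k k'; have := enum_valP k'; rewrite inE mxE => /eqP ->.
  by rewrite (inj_eq enum_val_inj) eq_sym.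
- move=> v /(signed_lap_kerP Usym _ s2) edge vS; apply/rowP => x; rewrite mxE.
  have const i j : U i j -> v 0 i = v 0 j.
    by move=> Uij; apply/eqP; rewrite -subr_eq0 -mulN1r edge.
  rewrite -(connect_edge_inv const (connect_from_root x)) vS // inE.
  exact: roots_root.
Qed.

Definition signed_indicator (r i : 'I_n) : F :=
  (root i == r)%:R * (if bipartition r i == bipartition r r then 1 else -1).

(* The signless Laplacian kernel: one dimension per bipartite component,
   spanned by the signed indicators; on a non-bipartite component a kernel
   vector must vanish, since otherwise its sign pattern would 2-colour it. *)
Lemma rank_kermx_signless_lap :
  \rank (kermx (signed_lap U (1 : F))) =
  #|[set r | (r \in roots U) && bipartite_component U r]|.
Proof.
set S := [set r | _].
pose B : 'M[F]_(#|S|, n) := \matrix_(k, i) signed_indicator (enum_val k) i.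
have s2 : (1 : F) ^+ 2 = 1 by rewrite expr1n.
apply: (rank_kermx_selection (B := B)).
- apply/row_matrixP => k; rewrite row_mul row0; apply/signed_lap_kerP => // i j Uij.
  have := enum_valP k; rewrite inE => /andP[_ bip]; set r := enum_val k in bip *.
  rewrite !mxE mul1r /signed_indicator -(edge_root Uij).
  have [ri|] := eqVneq (root i) r; last by rewrite !mul0r addr0.
  have ri_conn : connect U r i by rewrite -ri connect_from_root.
  have := bipartitionP bip ri_conn Uij.
  by case: (bipartition r i); case: (bipartition r j); case: (bipartition r r);
     rewrite /= ?mul1r ?subrr ?addrN ?addNr.
- move=> k k'; have := enum_valP k'; rewrite inE mxE /signed_indicator.
  case/andP=> /eqP -> _; rewrite (inj_eq enum_val_inj) eq_sym.
  by case: eqVneq => [->|_]; rewrite ?eqxx ?mulr1 ?mul0r.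
- move=> v /(signed_lap_kerP Usym _ s2) edge vS; apply/rowP => x; rewrite mxE.
  have anti i j : U i j -> v 0 j = - v 0 i.
    by move=> Uij; apply/eqP; rewrite -addr_eq0 addrC -[v 0 j]mul1r edge.
  set r := root x.
  have vr : v 0 r = 0.
    have [bip | not_bip] := boolP (bipartite_component U r).
      by apply: vS; rewrite inE bip andbT; exact: roots_root.
    apply/eqP; apply: contraNT not_bip => vr0.
    apply/existsP; exists [ffun a => v 0 a == v 0 r].
    apply/forallP => a; apply/forallP => b; apply/implyP => /andP[ra Uab].
    rewrite !ffunE (anti _ _ Uab).
    case: (connect_edge_antisym anti ra) => ->;
      by rewrite ?opprK eqxx eqNr (negbTE vr0).
  by case: (connect_edge_antisym anti (connect_from_root x)) => ->; rewrite vr ?oppr0.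
Qed.
End ComponentKernels.
End Components.

Lemma undir_part_sym (n : nat) (E : rel 'I_n) : symmetric (undir_part E).
Proof. by move=> i j; rewrite /undir_part andbC. Qed.

Lemma num_componentsE (n : nat) (U : rel 'I_n) :
  num_components U = #|[set r | r \in roots U]|.
Proof. by apply: eq_card => r; rewrite !inE andbT. Qed.

Lemma num_components_gt0 (n : nat) (U : rel 'I_n) :
  symmetric U -> (0 < n)%N -> (0 < num_components U)%N.
Proof.
case: n U => // n U Usym _; rewrite num_componentsE; apply/card_gt0P.
by exists (fingraph.root U ord0); rewrite inE; exact/roots_root/sym_connect_sym.
Qed.

(* At t^2 = 1 the deformed Laplacian is the signed Laplacian of G_U with
   sign -t: the cubic term A - S cancels the directed part of -tA. *)
Lemma deformed_lap_at_unit (R : numFieldType) (n : nat) (E : rel 'I_n) (t : R) :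
  t ^+ 2 = 1 -> deformed_lap (adjmx R E) t = signed_lap (undir_part E) (- t).
Proof.
move=> t2; have t3 : t ^+ 3 = t by rewrite exprS t2 mulr1.
apply/matrixP => i j; rewrite !mxE /degree /undir_part.
under eq_bigr do rewrite !mxE -natrM mulnb.
rewrite -[(\sum_k _) *+ (i == j)]mulr_natl -mulnb natrM t3 t2.
by move: (\sum__ _) ((i == j)%:R) ((E i j)%:R) ((E j i)%:R) => d x a b; ring.
Qed.

Lemma map_signed_lap (F K : nzRingType) (f : {rmorphism F -> K}) (n : nat)
    (U : rel 'I_n) (s : F) :
  map_mx f (signed_lap U s) = signed_lap U (f s).
Proof.
apply/matrixP => i j; rewrite !mxE rmorphD !rmorphM /= !rmorph_nat /degree rmorph_sum.
by under eq_bigr do rewrite rmorph_nat.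
Qed.

Lemma eigenvalue_geom_mult (R : numFieldType) (n : nat) (M : R -> 'M[R]_n) (l : R) :
  mxpoly_eigenvalue M l <-> (0 < geom_mult M l)%N.
Proof.
rewrite /mxpoly_eigenvalue /geom_mult mxrank_ker mxrank_tr subn_gt0.
have full_rank : (\rank (M l) == n) = (\det (M l) != 0).
  by rewrite -unitfE -unitmxE -row_free_unit.
by rewrite ltn_neqAle rank_leq_row andbT full_rank negbK; split=> /eqP.
Qed.

Lemma geom_mult_deformed_lap (R : numFieldType) (n : nat) (E : rel 'I_n) (s : rat) :
  s ^+ 2 = 1 ->
  geom_mult (deformed_lap (adjmx R E)) (ratr s) =
  \rank (kermx (signed_lap (undir_part E) (- s))).
Proof.
move=> s2; have t2 : (ratr s : R) ^+ 2 = 1 by rewrite -rmorphXn s2 rmorph1.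
rewrite /geom_mult (deformed_lap_at_unit _ t2).
by rewrite -rmorphN -map_signed_lap !mxrank_ker mxrank_tr mxrank_map.
Qed.

Theorem proposition3p5 (R : numFieldType) (n : nat) (E : rel 'I_n) :
  (0 < n)%N ->
  (forall i, ~~ E i i) ->
  let M := deformed_lap (adjmx R E) in
  let U := undir_part E in
  [/\ mxpoly_eigenvalue M 1,
      geom_mult M 1 = num_components U,
      mxpoly_eigenvalue M (-1) <-> (0 < num_bipartite_components U)%N
    & (0 < num_bipartite_components U)%N ->
      geom_mult M (-1) = num_bipartite_components U].
Proof.
move=> n_gt0 _ M U.
have Usym : symmetric U := undir_part_sym E.
have mult1 : geom_mult M 1 = num_components U.
  rewrite -(rmorph1 (@ratr R)) geom_mult_deformed_lap ?expr1n //.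
  by rewrite rank_kermx_lap // num_componentsE.
have multN1 : geom_mult M (-1) = num_bipartite_components U.
  rewrite -(rmorphN1 (@ratr R)) geom_mult_deformed_lap ?sqrrN ?expr1n // opprK.
  exact: rank_kermx_signless_lap.
split=> //; rewrite eigenvalue_geom_mult ?mult1 ?multN1 //.
exact: num_components_gt0.
Qed.
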